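(* Let $n\ge 1$, $d_1,\dots,d_n\ge 1$, $L_i\in\mathbb{C}^{d_i\times d_i}$ ($i=1,\dots,n$) and $C_{i,i-1}\in\mathbb{C}^{d_i\times d_{i-1}}$ ($i=2,\dots,n$). Assume: (i) each $L_i$ is invertible and diagonalizable, $L_iV_i=V_i\Lambda_i$ with $V_i$ invertible and $\Lambda_i=\mathrm{diag}(\lambda_{i,1},\dots,\lambda_{i,d_i})$; (ii) $\sigma(L_i)\cap\sigma(L_j)=\emptyset$ for all $i\neq j$; (iii) $\|L_1\|<\|L_2\|<\cdots<\|L_n\|\le 1$. Then for every $i\in\{1,\dots,n\}$, $s_i\in\{1,\dots,d_i\}$, $x=(x_1,\dots,x_n)\in\mathbb{C}^{d_1}\times\cdots\times\mathbb{C}^{d_n}$ and $t\in\mathbb{N}$, $$\big|\Psi_{i,s_i}(\mathsf{Lin}^{\circ t}(x))-\Psi_{i,s_i}(\mathsf{Nom}^{\circ t}(\mathsf{pert}(x)))\big|\le\|\psi_{i,s_i}\|\sum_{j=1}^{i-1}\|D_{i,j}\|\,\big\|L_j^t\,\mathsf{pert}_j(x_1,\dots,x_j)\big\|,$$ and $$\lim_{t\to\infty}\frac{\big|\Psi_{i,s_i}(\mathsf{Lin}^{\circ t}(x))-\Psi_{i,s_i}(\mathsf{Nom}^{\circ t}(\mathsf{pert}(x)))\big|}{\|L_i\|^t}=0.$$ (Equivalently, in Koopman notation, $|(\mathcal U_{\mathsf{Lin}}^{\circ t}\Psi_{i,s_i})(x)-(\mathcal U_{\mathsf{Nom}}^{\circ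 t}\Psi_{i,s_i})(\mathsf{pert}(x))|$ obeys these bounds, where $\mathcal U_F f=f\circ F$.)
   Context: Each $\mathbb{C}^{d_i}$ carries a fixed norm $\|\cdot\|$, matrices carry the induced operator norm. The linear chained cascade map is $\mathsf{Lin}(x_1,\dots,x_n)=(L_1x_1,\;L_2x_2+C_{2,1}x_1,\;\dots,\;L_nx_n+C_{n,n-1}x_{n-1})$, the nominal map is $\mathsf{Nom}(x_1,\dots,x_n)=(L_1x_1,\dots,L_nx_n)$, and $\mathsf{F}^{\circ t}$ is the $t$-fold iterate. The principal eigenfunction $\psi_{i,s}:\mathbb{C}^{d_i}\to\mathbb{C}$ is $\psi_{i,s}(x_i)=\hat e_s^{*}V_i^{-1}x_i$, where $\hat e_s$ is the $s$-th standard basis vector of $\mathbb{C}^{d_i}$; $\|\psi_{i,s}\|$ is its norm as a linear functional on $(\mathbb{C}^{d_i},\|\cdot\|)$; and $\Psi_{i,s}(x_1,\dots,x_n)=\psi_{i,s}(x_i)$ is its trivial extension to $\mathbb{C}^{d_1}\times\cdots\times\mathbb{C}^{d_n}$. Matrices $D_{i,j}$ ($1\le j\le i\le n$) are defined recursively in $i$: $D_{i,i}=I_{d_i}$; for $i\ge 2$, $1\le j\le i-1$, $[\tilde C_{i,j}]_{\ell,m}=[V_i^{-1}C_{i,i-1}D_{i-1,j}V_j]_{\ell,m}(1-\lambda_{j,m}/\lambda_{i,\ell})^{-1}$ and $D_{i,j}=L_i^{-1}V_i\tilde C_{i,j}V_j^{-1}$. Define $\mathsf{pert}_1(x_1)=x_1$,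 $\mathsf{pert}_i(x_1,\dots,x_i)=x_i+\sum_{j=1}^{i-1}(-1)^{i-1-j}D_{i,j}\mathsf{pert}_j(x_1,\dots,x_j)$ for $i\ge2$, and $\mathsf{pert}(x)=(\mathsf{pert}_1(x_1),\dots,\mathsf{pert}_n(x_1,\dots,x_n))$. *)

(* R : realType, complex numbers C := R[i] (mathcomp-real-closed),
   limits from MathComp-Analysis. Blocks are indexed 0-based by nat: block i here
   is block i+1 of the paper. *)
From HB Require Import structures.
From mathcomp Require Import all_boot all_order all_algebra.
From mathcomp Require Import complex.
From mathcomp Require Import all_classical all_reals topology normedtype sequences.

Set Implicit Arguments.
Unset Strict Implicit.
Unset Printing Implicit Defensive.

Import Order.TTheory GRing.Theory Num.Theory.
Local Open Scope ring_scope.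
Local Open Scope classical_set_scope.

Section CascadeDefs.
Variable R : realType.
Local Notation C := R[i].

Definition cmod (z : C) : R := Normc.normc z.

Definition is_norm (k : nat) (N : 'cV[C]_k -> R) : Prop :=
  [/\ forall x, N x = 0 -> x = 0,
      forall (a : C) x, N (a *: x) = cmod a * N x &
      forall x y, N (x + y) <= N x + N y].

Definition opnorm (m k : nat) (Nm : 'cV[C]_m -> R) (Nk : 'cV[C]_k -> R)
  (A : 'M[C]_(m, k)) : R :=
  sup [set Nm (A *m x) | x in [set x : 'cV[C]_k | Nk x <= 1]].

Definition fnorm (k : nat) (Nk : 'cV[C]_k -> R) (f : 'cV[C]_k -> C) : R :=
  sup [set cmod (f x) | x in [set x : 'cV[C]_k | Nk x <= 1]].

Definition psi (k : nat) (V : 'M[C]_k) (s : 'I_k) (y : 'cV[C]_k) : C :=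
  (invmx V *m y) s ord0.

Variable d : nat -> nat.
Variable L : forall i, 'M[C]_(d i).
(* Cc i is the paper's C_{i+2,i+1} : C^{d_{i+1}} -> C^{d_{i+2}} (coupling block i -> i+1) *)
Variable Cc : forall i, 'M[C]_(d i.+1, d i).
Variable V : forall i, 'M[C]_(d i).
Variable lam : forall i, 'rV[C]_(d i).

Definition state := forall i, 'cV[C]_(d i).

Definition Lin (x : state) : state := fun i =>
  match i return 'cV[C]_(d i) with
  | 0 => L 0 *m x 0
  | i'.+1 => L i'.+1 *m x i'.+1 + Cc i' *m x i'
  end.

Definition Nom (x : state) : state := fun i => L i *m x i.

Definition Psi (i : nat) (s : 'I_(d i)) (x : state) : C := psi (V i) s (x i).

(* identity matrix when j = i (zero otherwise; only used with j = i) *)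
Definition idm (i j : nat) : 'M[C]_(d i, d j) :=
  \matrix_(l, m) ((j == i) && (l == m :> nat))%:R.

Fixpoint Dm (i j : nat) {struct i} : 'M[C]_(d i, d j) :=
  match i return 'M[C]_(d i, d j) with
  | 0 => idm 0 j
  | i'.+1 =>
      if (j < i'.+1)%N then
        invmx (L i'.+1) *m V i'.+1 *m
        (\matrix_(l, m)
           ((invmx (V i'.+1) *m Cc i' *m Dm i' j *m V j) l m
             * (1 - lam j ord0 m / lam i'.+1 ord0 l)^-1))
        *m invmx (V j)
      else idm i'.+1 j
  end.

(* pertF x f i = pert_i(x) as soon as f >= i (fuel-based strong recursion) *)
Fixpoint pertF (x : state) (f i : nat) {struct f} : 'cV[C]_(d i) :=
  match f with
  | 0 => x i
  | f'.+1 => x i + \sum_(j < i) ((-1) ^+ (i - j.+1)%N) *: (Dm i j *m pertF x f' j)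
  end.

Definition pert (x : state) : state := fun i => pertF x i i.

End CascadeDefs.

(* The correction [pert] is inverted by the triangular map
     unpert y_i = y_i + \sum_(j < i) (-1)^(i-j) D_ij y_j,
   and [unpert] conjugates the nominal dynamics to the cascade: Lin \o unpert = unpert \o Nom.
   Componentwise this is the Sylvester equation L_(i+1) D_(i+1,j) - D_(i+1,j) L_j = C_i D_ij,
   which the recursive formula for D solves because L_(i+1) and L_j are diagonalised by
   V_(i+1), V_j and have disjoint spectra.  Hence Lin^t x = unpert (Nom^t (pert x)), so the i-th
   components of Lin^t x and Nom^t (pert x) differ by \sum_(j < i) (-1)^(i-j) D_ij L_j^t pert_j x.
   Applying psi_(i,s) and bounding with operator norms gives the estimate, and every term is
   o(||L_i||^t) because ||L_j|| < ||L_i|| for j < i.  Operator norms obey the usual bounds since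
   every norm on C^k dominates the coordinates, by compactness of a unit sphere. *)

From HB Require Import structures.
From mathcomp Require Import all_boot all_order all_algebra.
From mathcomp Require Import complex.
From mathcomp Require Import all_classical all_reals topology normedtype sequences.
From mathcomp Require Import derive ring lra.

Set Implicit Arguments.
Unset Strict Implicit.
Unset Printing Implicit Defensive.

Import Order.TTheory GRing.Theory Num.Theory.
Import numFieldNormedType.Exports.
Local Open Scope ring_scope.
Local Open Scope classical_set_scope.
Local Open Scope complex_scope.

Section ComplexModulus.
Variable R : realType.
Implicit Types z w : R[i].

Lemma cmod_ge0 z : 0 <= cmod z.
Proof. by case: z => a b; apply: sqrtr_ge0. Qed.

Lemma cmod0 : cmod (0 : R[i]) = 0. Proof. exact: Normc.normc0. Qed.
Lemma cmod1 : cmod (1 : R[i]) = 1. Proof. exact: Normc.normc1. Qed.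
Lemma cmodM z w : cmod (z * w) = cmod z * cmod w. Proof. exact: Normc.normcM. Qed.
Lemma cmodN z : cmod (- z) = cmod z. Proof. exact: normcN. Qed.
Lemma cmodD z w : cmod (z + w) <= cmod z + cmod w. Proof. exact: le_normcD. Qed.

Lemma cmod_real (a : R) : cmod a%:C = `|a|.
Proof. by rewrite /cmod /Normc.normc /= expr0n addr0 sqrtr_sqr. Qed.

Lemma cmod_sign t : cmod ((-1) ^+ t : R[i]) = 1.
Proof. by elim: t => [|t IHt]; rewrite ?cmod1 // exprS mulN1r cmodN. Qed.

Lemma cmod_le_ReIm z : cmod z <= `|complex.Re z| + `|complex.Im z|.
Proof.
case: z => a b /=; rewrite /cmod /Normc.normc -[leRHS]ger0_norm ?addr_ge0 //.
rewrite -sqrtr_sqr ler_sqrt ?addr_ge0 ?sqr_ge0 // sqrrD !real_normK ?num_real //.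
by rewrite -addrA lerD2l lerDr mulrn_wge0 // mulr_ge0.
Qed.

Lemma cmod_sum (I : Type) (r : seq I) (P : pred I) (f : I -> R[i]) :
  cmod (\sum_(i <- r | P i) f i) <= \sum_(i <- r | P i) cmod (f i).
Proof.
elim/big_ind2: _ => [|z1 a1 z2 a2 h1 h2|//]; first by rewrite cmod0.
exact: le_trans (cmodD _ _) (lerD h1 h2).
Qed.

End ComplexModulus.

Section NormFacts.
Variables (R : realType) (k : nat) (N : 'cV[R[i]]_k -> R).
Hypothesis hN : is_norm N.

Lemma is_normZ a x : N (a *: x) = cmod a * N x.
Proof. by case: hN => _ + _; apply. Qed.

Lemma is_normD x y : N (x + y) <= N x + N y.
Proof. by case: hN => _ _; apply. Qed.

Lemma is_norm_eq0 x : N x = 0 -> x = 0.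
Proof. by case: hN => + _ _; apply. Qed.

Lemma is_norm0 : N 0 = 0.
Proof. by rewrite -(scale0r (0 : 'cV[R[i]]_k)) is_normZ cmod0 mul0r. Qed.

Lemma is_normN x : N (- x) = N x.
Proof. by rewrite -scaleN1r is_normZ cmodN cmod1 mul1r. Qed.

Lemma is_norm_ge0 x : 0 <= N x.
Proof.
have := is_normD x (- x); rewrite subrr is_norm0 is_normN -mulr2n.
by rewrite pmulrn_lge0.
Qed.

Lemma is_norm_dist x y : `|N x - N y| <= N (x - y).
Proof.
have := is_normD (x - y) y; have := is_normD (y - x) x.
rewrite !subrK -opprB is_normN ler_norml; lra.
Qed.

Lemma is_norm_sum (I : Type) (r : seq I) (P : pred I) (f : I -> 'cV[R[i]]_k) :
  N (\sum_(i <- r | P i) f i) <= \sum_(i <- r | P i) N (f i).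
Proof.
elim/big_ind2: _ => [|x1 a1 x2 a2 h1 h2|//]; first by rewrite is_norm0.
exact: le_trans (is_normD _ _) (lerD h1 h2).
Qed.

Lemma is_norm_le_coord x : N x <= \sum_(p < k) cmod (x p 0) * N (delta_mx p 0).
Proof.
rewrite {1}(matrix_sum_delta x); apply: le_trans (is_norm_sum _ _ _) _.
by apply: ler_sum => p _; rewrite big_ord1 is_normZ.
Qed.

End NormFacts.

(* Heine-Borel is only available for real row vectors, so C^k is identified with R^(2k). *)
Section Realification.
Variables (R : realType) (k : nat).

Definition cV_of_R2 (v : 'rV[R]_(k + k)) : 'cV[R[i]]_k :=
  \col_p (v 0 (lshift k p) +i* v 0 (rshift k p)).

Definition R2_of_cV (x : 'cV[R[i]]_k) : 'rV[R]_(k + k) :=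
  row_mx (\row_p complex.Re (x p 0)) (\row_p complex.Im (x p 0)).

Lemma R2_of_cVK : cancel R2_of_cV cV_of_R2.
Proof.
move=> x; apply/matrixP => p j; rewrite ord1 mxE row_mxEl row_mxEr !mxE.
by case: (x p 0).
Qed.

Lemma cV_of_R2K : cancel cV_of_R2 R2_of_cV.
Proof.
move=> v; rewrite -[RHS]hsubmxK; congr row_mx; apply/rowP => p; by rewrite !mxE.
Qed.

Lemma cV_of_R2B v w : cV_of_R2 (v - w) = cV_of_R2 v - cV_of_R2 w.
Proof. by apply/matrixP => p j; rewrite !mxE. Qed.

Lemma cV_of_R2Z (a : R) v : cV_of_R2 (a *: v) = a%:C *: cV_of_R2 v.
Proof. by apply/matrixP => p j; rewrite !mxE; simpc. Qed.

Lemma cV_of_R2_eq0 v : cV_of_R2 v = 0 -> v = 0.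
Proof.
move=> v0; rewrite -(cV_of_R2K v) v0; apply/rowP => q.
by rewrite !mxE; case: splitP => ? _; rewrite !mxE.
Qed.

Lemma cmod_cV_of_R2_le v p : cmod (cV_of_R2 v p 0) <= 2 * `|v|.
Proof.
have entry_le q : `|v 0 q| <= `|v|.
  rewrite [leRHS]/Num.Def.normr /= mx_normrE; apply/bigmax_geP; right => /=.
  by exists (ord0, q); rewrite //= ord1.
rewrite mxE; apply: le_trans (cmod_le_ReIm _) _.
by rewrite mulr_natl mulr2n; apply: lerD; apply: entry_le.
Qed.

End Realification.

Lemma lipschitz_continuous (R : realType) (V : normedModType R) (f : V -> R) (K : R) :
  0 <= K -> (forall v w, `|f v - f w| <= K * `|v - w|) -> continuous f.
Proof.
move=> K0 fK v; apply/cvgrPdist_le => e e0.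
have eK0 : 0 < e / (K + 1) by rewrite divr_gt0 // ltr_wpDl.
near=> w; apply: le_trans (fK v w) _.
have vw : `|v - w| <= e / (K + 1).
  by near: w; exact: (@cvgr_dist_le _ _ _ (nbhs v) _ id v cvg_id _ eK0).
apply: le_trans (ler_wpM2l K0 vw) _.
rewrite mulrA ler_pdivrMr ?ltr_wpDl //; nra.
Unshelve. all: by end_near.
Qed.

Section NormEquivalence.
Variables (R : realType) (k : nat) (N : 'cV[R[i]]_k -> R).
Hypothesis hN : is_norm N.

Lemma is_norm_R2_continuous : continuous (fun v => N (cV_of_R2 v)).
Proof.
pose K := \sum_(p < k) 2 * N (delta_mx p 0).
apply: (@lipschitz_continuous _ _ _ K).
  by apply: sumr_ge0 => p _; rewrite mulr_ge0 ?is_norm_ge0.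
move=> v w; apply: le_trans (is_norm_dist hN _ _) _.
rewrite -cV_of_R2B mulr_suml; apply: le_trans (is_norm_le_coord hN _) _.
apply: ler_sum => p _; rewrite mulrAC ler_wpM2r ?is_norm_ge0 //.
exact: cmod_cV_of_R2_le.
Qed.

Lemma is_norm_R2_lower_bound :
  exists2 c : R, 0 < c & forall v, `|v| <= c * N (cV_of_R2 v).
Proof.
pose S := [set v : 'rV[R]_(k + k) | `|v| = 1].
have normalize v : v != 0 -> S (`|v|^-1 *: v).
  by move=> v0; rewrite /S /= normrZ normrV ?unitfE ?normr_eq0 // normr_id mulVf ?normr_eq0.
have [[w Sw]|S0] := pselect (S !=set0); last first.
  exists 1 => // v; have [->|v0] := eqVneq v 0; first by rewrite normr0 mul1r is_norm_ge0.
  by case: S0; exists (`|v|^-1 *: v); apply: normalize.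
have S_closed : closed S.
  by apply: (@closed_comp _ R _ _ _ (@closed_eq R 1)) => v _; apply: norm_continuous.
have S_compact : compact S.
  by apply: bounded_closed_compact S_closed; exists 1; split => // M M1 v /= ->; apply: ltW.
have [u Su umin] := compact_EVT_min (ex_intro _ w Sw) S_compact
  (continuous_subspaceT is_norm_R2_continuous).
have u_gt0 : 0 < N (cV_of_R2 u).
  rewrite lt_def is_norm_ge0 // andbT; apply/eqP => /(is_norm_eq0 hN)/cV_of_R2_eq0 u0.
  by move: Su; rewrite inE /S /= u0 normr0 => /esym/eqP; rewrite oner_eq0.
exists (N (cV_of_R2 u))^-1; first by rewrite invr_gt0.
move=> v; have [->|v0] := eqVneq v 0; first by rewrite normr0 mulr_ge0 ?invr_ge0 ?is_norm_ge0.
have := umin _ (mem_set (normalize v v0)).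
rewrite cV_of_R2Z is_normZ // cmod_real ger0_norm ?invr_ge0 // mulrC.
by rewrite ler_pdivlMr ?normr_gt0 // ler_pdivlMl.
Qed.

Lemma is_norm_coord_le :
  exists2 c : R, 0 <= c & forall (x : 'cV[R[i]]_k) q, cmod (x q 0) <= c * N x.
Proof.
have [c c0 hc] := is_norm_R2_lower_bound; exists (2 * c); first by rewrite mulr_ge0 // ltW.
move=> x q; rewrite -{1}(R2_of_cVK x) -mulrA -[N x](congr1 N (R2_of_cVK x)).
by apply: le_trans (cmod_cV_of_R2_le _ _) _; rewrite ler_pM2l.
Qed.

End NormEquivalence.

Section UnitBallSup.
Variables (R : realType) (k : nat) (N F : 'cV[R[i]]_k -> R) (K : R).
Hypotheses (hN : is_norm N) (F_hom : forall a x, F (a *: x) = cmod a * F x)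
  (F_le : forall x, F x <= K * N x).

Let F0 : F 0 = 0.
Proof. by rewrite -(scale0r (0 : 'cV[R[i]]_k)) F_hom cmod0 mul0r. Qed.

Let has_sup_unit_ball : has_sup [set F x | x in [set x | N x <= 1]].
Proof.
split; first by exists (F 0), 0; rewrite //= is_norm0.
exists `|K| => _ [x /= Nx1 <-]; apply: le_trans (F_le x) _.
apply: le_trans (ler_wpM2r (is_norm_ge0 hN x) (ler_norm K)) _.
by rewrite -[leRHS]mulr1 ler_wpM2l.
Qed.

Lemma unit_ball_sup_ge0 : 0 <= sup [set F x | x in [set x | N x <= 1]].
Proof.
rewrite -F0; apply: (sup_upper_bound has_sup_unit_ball).
by exists 0; rewrite //= is_norm0.
Qed.

Lemma le_unit_ball_sup x : F x <= sup [set F x | x in [set x | N x <= 1]] * N x.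
Proof.
have [/(is_norm_eq0 hN)->|Nx0] := eqVneq (N x) 0.
  by rewrite F0 (is_norm0 hN) mulr0.
have Nx_gt0 : 0 < N x by rewrite lt_def Nx0 is_norm_ge0.
have cmod_invN : cmod (N x)^-1%:C = (N x)^-1 by rewrite cmod_real ger0_norm ?invr_ge0 ?ltW.
have : F ((N x)^-1%:C *: x) <= sup [set F x | x in [set x | N x <= 1]].
  apply: (sup_upper_bound has_sup_unit_ball); exists ((N x)^-1%:C *: x) => //=.
  by rewrite is_normZ // cmod_invN mulVf.
by rewrite F_hom cmod_invN mulrC ler_pdivrMr.
Qed.

End UnitBallSup.

Section OperatorNorms.
Variables (R : realType) (k : nat) (Nk : 'cV[R[i]]_k -> R).
Hypothesis hNk : is_norm Nk.

Lemma coord_mulmx_bounded m (B : 'M[R[i]]_(m, k)) p :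
  exists K, forall y, cmod ((B *m y) p 0) <= K * Nk y.
Proof.
have [c c0 hc] := is_norm_coord_le hNk; exists (\sum_j cmod (B p j) * c) => y.
rewrite mxE mulr_suml; apply: le_trans (cmod_sum _ _ _) _.
by apply: ler_sum => j _; rewrite cmodM -mulrA ler_wpM2l ?cmod_ge0.
Qed.

Let psiZ (W : 'M[R[i]]_k) s a x : cmod (psi W s (a *: x)) = cmod a * cmod (psi W s x).
Proof. by rewrite /psi -scalemxAr mxE cmodM. Qed.

Lemma fnorm_psi_ge0 (W : 'M[R[i]]_k) s : 0 <= fnorm Nk (psi W s).
Proof.
have [K hK] := coord_mulmx_bounded (invmx W) s.
exact: (unit_ball_sup_ge0 hNk (psiZ W s) hK).
Qed.

Lemma le_fnorm_psi (W : 'M[R[i]]_k) s x : cmod (psi W s x) <= fnorm Nk (psi W s) * Nk x.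
Proof.
have [K hK] := coord_mulmx_bounded (invmx W) s.
exact: (le_unit_ball_sup hNk (psiZ W s) hK).
Qed.

Variables (m : nat) (Nm : 'cV[R[i]]_m -> R).
Hypothesis hNm : is_norm Nm.

Let mulmx_bounded (A : 'M[R[i]]_(m, k)) : exists K, forall x, Nm (A *m x) <= K * Nk x.
Proof.
have /choice [K hK] := coord_mulmx_bounded A.
exists (\sum_p K p * Nm (delta_mx p 0)) => x; rewrite mulr_suml.
apply: le_trans (is_norm_le_coord hNm _) _; apply: ler_sum => p _.
by rewrite mulrAC ler_wpM2r ?is_norm_ge0.
Qed.

Let mulmxZ (A : 'M[R[i]]_(m, k)) a x : Nm (A *m (a *: x)) = cmod a * Nm (A *m x).
Proof. by rewrite -scalemxAr is_normZ. Qed.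

Lemma opnorm_ge0 (A : 'M[R[i]]_(m, k)) : 0 <= opnorm Nm Nk A.
Proof. by have [K hK] := mulmx_bounded A; exact: (unit_ball_sup_ge0 hNk (mulmxZ A) hK). Qed.

Lemma le_opnorm (A : 'M[R[i]]_(m, k)) x : Nm (A *m x) <= opnorm Nm Nk A * Nk x.
Proof. by have [K hK] := mulmx_bounded A; exact: (le_unit_ball_sup hNk (mulmxZ A) hK). Qed.

End OperatorNorms.

Lemma le_opnorm_exp (R : realType) k (N : 'cV[R[i]]_k -> R) (A : 'M[R[i]]_k) t x :
  is_norm N -> N (A ^+ t *m x) <= opnorm N N A ^+ t * N x.
Proof.
move=> hN; elim: t x => [|t IHt] x; first by rewrite expr0 mul1mx mul1r.
rewrite exprS -mulmxE -mulmxA; apply: le_trans (le_opnorm hN hN _ _) _.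
by rewrite exprS -mulrA ler_wpM2l ?opnorm_ge0.
Qed.

Section Sylvester.
Variables (F : fieldType) (m k : nat).

Lemma col_unitmx_neq0 (V : 'M[F]_m) p : V \in unitmx -> col p V != 0.
Proof.
move=> V_unit; apply/eqP => Vp0.
have : col p (invmx V *m V) = 0 by rewrite colE -mulmxA -colE Vp0 mulmx0.
by rewrite mulVmx // => /matrixP /(_ p 0); rewrite !mxE eqxx => /eqP; rewrite oner_eq0.
Qed.

Lemma mulmx_col_diag (A V : 'M[F]_m) (l : 'rV[F]_m) p :
  A *m V = V *m diag_mx l -> A *m col p V = l ord0 p *: col p V.
Proof.
move=> AV; rewrite colE mulmxA AV mul_mx_diag -!colE.
by apply/matrixP => q j; rewrite !mxE mulrC.
Qed.

Lemma eigenvalue_diag_entry (A V : 'M[F]_m) (l : 'rV[F]_m) p :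
  V \in unitmx -> A *m V = V *m diag_mx l -> eigenvalue A (l ord0 p).
Proof.
move=> V_unit AV; rewrite /eigenvalue /eigenspace kermx_eq0 row_free_unit.
apply: contra (col_unitmx_neq0 p V_unit) => shift_unit.
have shift_col : (A - (l ord0 p)%:M) *m col p V = 0.
  by rewrite mulmxBl (mulmx_col_diag _ AV) mul_scalar_mx subrr.
by rewrite -(mulKmx shift_unit (col p V)) shift_col mulmx0.
Qed.

Lemma diag_entry_neq0 (A V : 'M[F]_m) (l : 'rV[F]_m) p :
  A \in unitmx -> V \in unitmx -> A *m V = V *m diag_mx l -> l ord0 p != 0.
Proof.
move=> A_unit V_unit AV; apply: contraNneq (col_unitmx_neq0 p V_unit) => lp0.
by rewrite -(mulKmx A_unit (col p V)) (mulmx_col_diag _ AV) lp0 scale0r mulmx0.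
Qed.

Definition sylvester_sol (A VA : 'M[F]_m) (lA : 'rV[F]_m) (VB : 'M[F]_k)
    (lB : 'rV[F]_k) (X : 'M[F]_(m, k)) : 'M[F]_(m, k) :=
  invmx A *m VA
  *m (\matrix_(p, q) ((invmx VA *m X *m VB) p q * (1 - lB ord0 q / lA ord0 p)^-1))
  *m invmx VB.

Lemma sylvester_solP (A VA : 'M[F]_m) (lA : 'rV[F]_m) (B VB : 'M[F]_k) (lB : 'rV[F]_k)
    (X : 'M[F]_(m, k)) :
  A \in unitmx -> VA \in unitmx -> VB \in unitmx ->
  A *m VA = VA *m diag_mx lA -> B *m VB = VB *m diag_mx lB ->
  (forall p q, lA ord0 p != lB ord0 q) ->
  A *m sylvester_sol A VA lA VB lB X - sylvester_sol A VA lA VB lB X *m B = X.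
Proof.
move=> A_unit VA_unit VB_unit AVA BVB lAB.
have lA_neq0 p : lA ord0 p != 0 := diag_entry_neq0 p A_unit VA_unit AVA.
pose Y := invmx VA *m X *m VB.
pose M := \matrix_(p, q) (Y p q * (1 - lB ord0 q / lA ord0 p)^-1).
pose M' := \matrix_(p, q) (M p q * (lB ord0 q / lA ord0 p)).
have diagM' : diag_mx lA *m M' = M *m diag_mx lB.
  apply/matrixP => p q; rewrite mul_diag_mx mul_mx_diag !mxE mulrCA.
  by congr (_ * _); rewrite mulrC divfK.
have VBB : invmx VB *m B = diag_mx lB *m invmx VB.
  by rewrite -[LHS]mulmx1 -(mulmxV VB_unit) !mulmxA -(mulmxA _ B) BVB mulmxA mulVmx ?mul1mx.
have -> : sylvester_sol A VA lA VB lB X = invmx A *m VA *m M *m invmx VB by [].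
have -> : A *m (invmx A *m VA *m M *m invmx VB) = VA *m M *m invmx VB.
  by rewrite -!mulmxA mulKVmx.
have -> : invmx A *m VA *m M *m invmx VB *m B = VA *m M' *m invmx VB.
  rewrite -!mulmxA VBB (mulmxA M) -diagM' !mulmxA.
  by rewrite -(mulmxA (invmx A)) -AVA mulKmx.
rewrite -mulmxBl -mulmxBr.
have -> : M - M' = Y.
  apply/matrixP => p q; rewrite !mxE.
  have r0 : 1 - lB ord0 q / lA ord0 p != 0.
    by rewrite subr_eq0 -[1](divff (lA_neq0 p)) (inj_eq (mulIf _)) ?invr_eq0 ?lAB.
  by set z := _ / (1 - _); rewrite -{1}[z]mulr1 -mulrBr /z divfK.
by rewrite /Y !mulmxA mulmxV // mul1mx -mulmxA mulmxV // mulmx1.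
Qed.

End Sylvester.

Section Cascade.
Variables (R : realType) (d : nat -> nat) (L : forall i, 'M[R[i]]_(d i))
  (Cc : forall i, 'M[R[i]]_(d i.+1, d i)) (V : forall i, 'M[R[i]]_(d i))
  (lam : forall i, 'rV[R[i]]_(d i)).
Local Notation D := (Dm L Cc V lam).

Lemma pertF_fuel x f g i : (i <= f)%N -> (i <= g)%N ->
  pertF L Cc V lam x f i = pertF L Cc V lam x g i.
Proof.
elim: f g i => [|f IHf] [|g] i //= if_ ig.
- by move: if_; rewrite leqn0 => /eqP->; rewrite big_ord0 addr0.
- by move: ig; rewrite leqn0 => /eqP->; rewrite big_ord0 addr0.
- congr (_ + _); apply: eq_bigr => j _; rewrite (IHf g) //.
    by rewrite -ltnS (leq_trans (ltn_ord j)).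
  by rewrite -ltnS (leq_trans (ltn_ord j)).
Qed.

Lemma pertE x i : pert L Cc V lam x i =
  x i + \sum_(j < i) (-1) ^+ (i - j.+1) *: (D i j *m pert L Cc V lam x j).
Proof.
case: i => [|i]; first by rewrite /pert /= big_ord0 addr0.
rewrite /pert /=; congr (_ + _); apply: eq_bigr => j _.
by rewrite (pertF_fuel _ _ (leqnn j)) // -ltnS.
Qed.

Definition unpert (y : state R d) : state R d := fun i =>
  y i + \sum_(j < i) (-1) ^+ (i - j) *: (D i j *m y j).

Lemma unpert_pert x i : unpert (pert L Cc V lam x) i = x i.
Proof.
rewrite /unpert pertE -addrA -big_split /= big1 ?addr0 // => j _.
by rewrite -scalerDl -(subnSK (ltn_ord j)) exprS mulN1r addrN scale0r.
Qed.

Lemma Dm_diag i : D i i = 1%:M.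
Proof.
have -> : D i i = idm R d i i by case: i => [|i] //=; rewrite ltnn.
by apply/matrixP => p q; rewrite !mxE eqxx.
Qed.

Lemma unpertE y i : unpert y i = \sum_(j < i.+1) (-1) ^+ (i - j) *: (D i j *m y j).
Proof. by rewrite big_ord_recr /= subnn expr0 scale1r Dm_diag mul1mx addrC. Qed.

Lemma Lin_eq x x' i : (forall j, (j <= i)%N -> x j = x' j) -> Lin L Cc x i = Lin L Cc x' i.
Proof. by case: i => [|i] xx' /=; rewrite ?xx' ?(xx' i) // leqW. Qed.

Lemma iter_Lin_eq t x x' i : (forall j, (j <= i)%N -> x j = x' j) ->
  iter t (Lin L Cc) x i = iter t (Lin L Cc) x' i.
Proof.
elim: t i => [|t IHt] i xx' /=; first exact: xx'.
by apply: Lin_eq => j ji; apply: IHt => l lj; apply/xx'/(leq_trans lj).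
Qed.

Lemma iter_Nom t y i : iter t (Nom L) y i = L i ^+ t *m y i.
Proof.
elim: t => [|t IHt] /=; first by rewrite expr0 mul1mx.
by rewrite /Nom IHt mulmxA exprS mulmxE.
Qed.

Lemma Dm_succ i j : (j <= i)%N ->
  D i.+1 j = sylvester_sol (L i.+1) (V i.+1) (lam i.+1) (V j) (lam j) (Cc i *m D i j).
Proof. by move=> ji; rewrite [LHS]/= ltnS ji /sylvester_sol !mulmxA. Qed.

Variable n : nat.
Hypothesis diagonalizable : forall i, (i < n)%N ->
  [/\ L i \in unitmx, V i \in unitmx & L i *m V i = V i *m diag_mx (lam i)].
Hypothesis disjoint_spectra : forall i j, (i < n)%N -> (j < n)%N -> i != j ->
  forall a : R[i], ~~ (eigenvalue (L i) a && eigenvalue (L j) a).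

Lemma Dm_sylvester i j : (i.+1 < n)%N -> (j <= i)%N ->
  L i.+1 *m D i.+1 j - D i.+1 j *m L j = Cc i *m D i j.
Proof.
move=> i_lt ji; have j_lt : (j < n)%N by rewrite (leq_ltn_trans ji) // ltnW.
have [Li_unit Vi_unit LVi] := diagonalizable i_lt.
have [Lj_unit Vj_unit LVj] := diagonalizable j_lt.
have ij : i.+1 != j by rewrite gtn_eqF // ltnS.
rewrite Dm_succ //; apply: sylvester_solP => // p q.
apply: contraNneq (disjoint_spectra i_lt j_lt ij (lam i.+1 ord0 p)) => lam_pq.
by rewrite (eigenvalue_diag_entry p Vi_unit LVi) lam_pq (eigenvalue_diag_entry q Vj_unit LVj).
Qed.

Lemma Dm_sylvester_signed i j (z : 'cV[R[i]]_(d j)) : (i.+1 < n)%N -> (j <= i)%N ->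
  L i.+1 *m ((-1) ^+ (i.+1 - j) *: (D i.+1 j *m z)) + Cc i *m ((-1) ^+ (i - j) *: (D i j *m z))
  = (-1) ^+ (i.+1 - j) *: (D i.+1 j *m (L j *m z)).
Proof.
move=> i_lt ji; have LD : L i.+1 *m D i.+1 j = D i.+1 j *m L j + Cc i *m D i j.
  by rewrite -Dm_sylvester // addrC subrK.
rewrite -!scalemxAr !mulmxA LD mulmxDl scalerDr -addrA -scalerDl.
by rewrite subSn // exprS mulN1r addNr scale0r addr0.
Qed.

Lemma Lin_unpert y i : (i < n)%N -> Lin L Cc (unpert y) i = unpert (Nom L y) i.
Proof.
case: i => [|i] i_lt; first by rewrite /Lin /unpert /Nom !big_ord0 !addr0.
rewrite /Lin !unpertE (big_ord_recr i.+1) [RHS](big_ord_recr i.+1).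
rewrite subnn expr0 !scale1r !Dm_diag !mul1mx mulmxDr addrAC; congr (_ + _).
rewrite !mulmx_sumr -big_split; apply: eq_bigr => j _.
exact: (Dm_sylvester_signed (y j) i_lt (ltn_ord j)).
Qed.

Lemma iter_Lin_unpert t y i : (i < n)%N ->
  iter t (Lin L Cc) (unpert y) i = unpert (iter t (Nom L) y) i.
Proof.
elim: t i => [|t IHt] i i_lt //=; rewrite -Lin_unpert //.
by apply: Lin_eq => j ji; apply: IHt; apply: leq_ltn_trans i_lt.
Qed.

Lemma iter_Lin_sub_Nom_pert t x i : (i < n)%N ->
  iter t (Lin L Cc) x i - iter t (Nom L) (pert L Cc V lam x) i =
  \sum_(j < i) (-1) ^+ (i - j) *: (D i j *m (L j ^+ t *m pert L Cc V lam x j)).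
Proof.
move=> i_lt; rewrite (@iter_Lin_eq t x (unpert (pert L Cc V lam x))); last first.
  by move=> j _; rewrite unpert_pert.
rewrite iter_Lin_unpert // /unpert addrAC subrr add0r.
by apply: eq_bigr => j _; rewrite iter_Nom.
Qed.

End Cascade.

Lemma psiB (R : realType) k (W : 'M[R[i]]_k) s (y z : 'cV[R[i]]_k) :
  psi W s y - psi W s z = psi W s (y - z).
Proof. by rewrite /psi mulmxBr !mxE. Qed.

Lemma increasing_chain_lt (disp : Order.disp_t) (T : porderType disp) (a : nat -> T) n :
  (forall i, (i.+1 < n)%N -> (a i < a i.+1)%O) ->
  forall j i, (j < i)%N -> (i < n)%N -> (a j < a i)%O.
Proof.
move=> a_lt j i ji i_lt.
apply: (@Order.NatMonotonyTheory.homo_ltn_lt_in _ _ [pred k | (k < n)%N]) => //.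
- by move=> x y _; rewrite !inE => y_lt k /andP[_ ky]; apply: ltn_trans ky y_lt.
- by move=> k _; rewrite inE => /a_lt.
- by rewrite inE (ltn_trans ji).
Qed.

Lemma cvg_geometric_ratio (R : realType) (u : nat -> R) (a b K : R) :
  0 <= a -> a < b -> (forall t, 0 <= u t <= K * a ^+ t) ->
  (fun t => u t / b ^+ t) @ \oo --> 0.
Proof.
move=> a0 ab u_le; have b0 : 0 < b by apply: le_lt_trans ab.
have ab1 : `|a / b| < 1 by rewrite ger0_norm ?divr_ge0 ?(ltW b0) // ltr_pdivrMr // mul1r.
apply: (@squeeze_cvgr _ _ _ _ (cst 0) (fun t => K * (a / b) ^+ t)).
- near=> t; have /andP[u0 uK] := u_le t; apply/andP; split.
    by rewrite divr_ge0 // exprn_ge0 // ltW.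
  by rewrite exprMn exprVn mulrA ler_pM2r // invr_gt0 exprn_gt0.
- exact: cvg_cst.
- by rewrite -(mulr0 K); apply: cvgMl_tmp; apply: cvg_expr.
Unshelve. all: by end_near.
Qed.

Section KoopmanError.
Variables (R : realType) (n : nat) (d : nat -> nat) (N : forall i, 'cV[R[i]]_(d i) -> R)
  (L : forall i, 'M[R[i]]_(d i)) (Cc : forall i, 'M[R[i]]_(d i.+1, d i))
  (V : forall i, 'M[R[i]]_(d i)) (lam : forall i, 'rV[R[i]]_(d i)).
Arguments N : clear implicits.
Hypothesis norms : forall i, (i < n)%N -> is_norm (N i).
Hypothesis diagonalizable : forall i, (i < n)%N ->
  [/\ L i \in unitmx, V i \in unitmx & L i *m V i = V i *m diag_mx (lam i)].
Hypothesis disjoint_spectra : forall i j, (i < n)%N -> (j < n)%N -> i != j ->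
  forall a : R[i], ~~ (eigenvalue (L i) a && eigenvalue (L j) a).
Local Notation opnL i := (opnorm (N i) (N i) (L i)).

Lemma Psi_error_le i (s : 'I_(d i)) (x : state R d) t : (i < n)%N ->
  cmod (Psi V s (iter t (Lin L Cc) x) - Psi V s (iter t (Nom L) (pert L Cc V lam x)))
  <= fnorm (N i) (psi (V i) s)
     * \sum_(j < i) opnorm (N i) (N j) (Dm L Cc V lam i j)
                    * N j (L j ^+ t *m pert L Cc V lam x j).
Proof.
move=> i_lt; have hNi := norms i_lt.
rewrite /Psi psiB (iter_Lin_sub_Nom_pert Cc diagonalizable disjoint_spectra _ _ i_lt).
apply: le_trans (le_fnorm_psi hNi _ _ _) _; rewrite ler_wpM2l ?fnorm_psi_ge0 //.
apply: le_trans (is_norm_sum hNi _ _ _) _; apply: ler_sum => j _.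
by rewrite is_normZ // cmod_sign mul1r (le_opnorm (norms (ltn_trans (ltn_ord j) i_lt))).
Qed.

Hypothesis increasing : forall i, (i.+1 < n)%N -> opnL i < opnL i.+1.

Lemma orbit_ratio_cvg0 j i y : (j < i)%N -> (i < n)%N ->
  (fun t => N j (L j ^+ t *m y) / opnL i ^+ t) @ \oo --> 0.
Proof.
move=> ji i_lt; have hNj := norms (ltn_trans ji i_lt).
apply: (@cvg_geometric_ratio _ _ (opnL j) _ (N j y)).
- exact: opnorm_ge0.
- exact: (@increasing_chain_lt _ _ (fun k => opnL k) n increasing _ _ ji i_lt).
- by move=> t; rewrite is_norm_ge0 //= mulrC le_opnorm_exp.
Qed.

Lemma weighted_orbit_sum_cvg0 i (a : R) (c : 'I_i -> R) (y : state R d) : (i < n)%N ->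
  (fun t => a * \sum_(j < i) c j * (N j (L j ^+ t *m y j) / opnL i ^+ t)) @ \oo --> 0.
Proof.
move=> i_lt; rewrite -[X in _ --> X](mulr0 a); apply: cvgMl_tmp.
rewrite -[X in _ --> X](big1_eq (op := +%R) (index_enum 'I_i) xpredT).
apply: (cvg_big add_continuous) => // j _.
rewrite -[X in _ --> X](mulr0 (c j)); apply: cvgMl_tmp.
exact: orbit_ratio_cvg0 (ltn_ord j) i_lt.
Qed.

Lemma Psi_error_ratio_cvg0 i (s : 'I_(d i)) (x : state R d) : (i < n)%N ->
  (fun t => cmod (Psi V s (iter t (Lin L Cc) x) - Psi V s (iter t (Nom L) (pert L Cc V lam x)))
            / opnL i ^+ t) @ \oo --> 0.
Proof.
move=> i_lt; have b0 : 0 <= opnL i := opnorm_ge0 (norms i_lt) (norms i_lt) _.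
apply: (squeeze_cvgr _ (cvg_cst 0) (weighted_orbit_sum_cvg0 (fnorm (N i) (psi (V i) s))
  (fun j => opnorm (N i) (N j) (Dm L Cc V lam i j)) (pert L Cc V lam x) i_lt)).
near=> t; apply/andP; split; first by rewrite divr_ge0 ?cmod_ge0 ?exprn_ge0.
under eq_bigr do rewrite mulrA.
by rewrite -mulr_suml mulrA ler_wpM2r ?invr_ge0 ?exprn_ge0 ?Psi_error_le.
Unshelve. all: by end_near.
Qed.

End KoopmanError.

Theorem theorem2 (R : realType) (n : nat) (d : nat -> nat)
  (N : forall i, 'cV[R[i]]_(d i) -> R)
  (L : forall i, 'M[R[i]]_(d i)) (Cc : forall i, 'M[R[i]]_(d i.+1, d i))
  (V : forall i, 'M[R[i]]_(d i)) (lam : forall i, 'rV[R[i]]_(d i)) :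
  (0 < n)%N ->
  (forall i, (i < n)%N -> (0 < d i)%N) ->
  (forall i, (i < n)%N -> is_norm (N i)) ->
  (forall i, (i < n)%N ->
     [/\ L i \in unitmx, V i \in unitmx & L i *m V i = V i *m diag_mx (lam i)]) ->
  (forall i j, (i < n)%N -> (j < n)%N -> i != j ->
     forall a : R[i], ~~ (eigenvalue (L i) a && eigenvalue (L j) a)) ->
  (forall i, (i.+1 < n)%N -> opnorm (N i) (N i) (L i) < opnorm (N i.+1) (N i.+1) (L i.+1)) ->
  opnorm (N n.-1) (N n.-1) (L n.-1) <= 1 ->
  forall (i : nat) (s : 'I_(d i)) (x : forall k, 'cV[R[i]]_(d k)), (i < n)%N ->
    (forall t : nat,
       cmod (Psi V s (iter t (Lin L Cc) x) - Psi V s (iter t (Nom L) (pert L Cc V lam x)))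
       <= fnorm (N i) (psi (V i) s)
          * \sum_(j < i) opnorm (N i) (N j) (Dm L Cc V lam i j)
                         * N j (L j ^+ t *m pert L Cc V lam x j))
    /\
    (fun t : nat =>
       cmod (Psi V s (iter t (Lin L Cc) x) - Psi V s (iter t (Nom L) (pert L Cc V lam x)))
       / opnorm (N i) (N i) (L i) ^+ t) @ \oo --> (0 : R).
Proof.
(* Neither the positivity of [n] and [d i] nor [opnorm (L n.-1) <= 1] is needed. *)
move=> _ _ norms diagonalizable disjoint_spectra increasing _ i s x i_lt; split.
  by move=> t; apply: (Psi_error_le Cc norms diagonalizable disjoint_spectra).
exact: (Psi_error_ratio_cvg0 Cc norms diagonalizable disjoint_spectra increasing).
Qed.
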